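(* Let $(K,\mathrm{val})$ be a valued field in which every strict unit admits a square root in $K$. Then $(K,\mathrm{val})$ admits a pseudo-angular component map $\mathrm{p.an}:K^\times\to F^\times$.
   Context: Let $(G,\le)$ be a totally ordered abelian group written multiplicatively with identity $e$, and $G^2=\{g^2: g\in G\}$. Let $(K,\mathrm{val})$ be a valued field with surjective valuation $\mathrm{val}:K\to G\cup\{\infty\}$, valuation ring $B=\{x\in K:\mathrm{val}(x)\ge e\}$ (so $B^\times=\{x:\mathrm{val}(x)=e\}$), residue map $\pi:B\to F$ and residue field $F$. A strict unit is an element $x\in B^\times$ with $\pi(x)=1$. For $g\in G$, $\overline g$ denotes its class in $G/G^2$. A pseudo-angular component map is a map $\mathrm{p.an}:K^\times\to F^\times$ such that: (1) $\mathrm{p.an}(u)=\pi(u)$ for all $u\in B^\times$; (2) $\mathrm{p.an}(ux)=\pi(u)\mathrm{p.an}(x)$ for all $u\in B^\times$, $x\in K^\times$; (3) for every $g\in G$ and $c\in F^\times$ there is $w\in K$ with $\mathrm{val}(w)=g$ and $\mathrm{p.an}(w)=c$; (4) for nonzero $x_1,x_2\in K$ with $x_1+x_2\ne0$: if $\mathrm{val}(x_1)<\mathrm{val}(x_2)$ then $\mathrm{p.an}(x_1+x_2)=\mathrm{p.an}(x_1)$; if $\mathrm{val}(x_1)=\mathrm{val}(x_2)$ and $\mathrm{p.an}(x_1)+\mathrm{p.an}(x_2)\neq0$ then $\mathrm{val}(x_1+x_2)=\mathrm{val}(x_1)$ and $\mathrm{p.an}(x_1+x_2)=\mathrm{p.an}(x_1)+\mathrm{p.an}(x_2)$;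 (5) for $x,y\in K^\times$ with $\overline{\mathrm{val}(x)}=\overline{\mathrm{val}(y)}$ and $\mathrm{p.an}(x)=\mathrm{p.an}(y)$ there is $u\in K^\times$ with $y=u^2x$; (6) for all $a,u\in K^\times$ there is $k\in F^\times$ with $\mathrm{p.an}(au^2)=\mathrm{p.an}(a)k^2$. *)

From mathcomp Require Import all_boot all_algebra.
Set Implicit Arguments.
Unset Strict Implicit.
Unset Printing Implicit Defensive.
Import GRing.Theory.
Local Open Scope ring_scope.

Definition is_ordered_abgroup (G : Type) (mul : G -> G -> G) (e : G)
    (inv : G -> G) (le : G -> G -> Prop) : Prop :=
  ((forall a b c, mul a (mul b c) = mul (mul a b) c) /\
      (forall a b, mul a b = mul b a) /\
      (forall a, mul e a = a) /\
      (forall a, mul (inv a) a = e) /\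
      (forall a, le a a) /\
      (forall a b, le a b -> le b a -> a = b) /\
      (forall a b c, le a b -> le b c -> le a c) /\
      (forall a b, le a b \/ le b a)/\
      (forall a b c, le a b -> le (mul a c) (mul b c))).

(* G ∪ {∞} is represented by option G, with None = ∞. *)
Definition omul (G : Type) (mul : G -> G -> G) (a b : option G) : option G :=
  match a, b with Some x, Some y => Some (mul x y) | _, _ => None end.

Definition ole (G : Type) (le : G -> G -> Prop) (a b : option G) : Prop :=
  match a, b with
  | _, None => True
  | None, Some _ => False
  | Some x, Some y => le x y
  end.

Definition is_valuation (G : Type) (mul : G -> G -> G) (le : G -> G -> Prop)
    (K : fieldType) (val : K -> option G) : Prop :=
  ((forall x : K, val x = None <-> x = 0) /\
      (forall x y : K, val (x * y) = omul mul (val x) (val y)) /\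
      (forall x y : K, ole le (val x) (val (x + y)) \/ ole le (val y) (val (x + y)))/\
      (forall g : G, exists x : K, val x = Some g)).

Definition in_B (G : Type) (e : G) (le : G -> G -> Prop) (K : fieldType)
    (val : K -> option G) (x : K) : Prop := ole le (Some e) (val x).

(* pi : B -> F is the residue map: a surjective ring morphism on B whose kernel
   is the maximal ideal {x | val x > e}; F is then the residue field.
   (pi is given as a total function K -> F; its values off B are irrelevant.) *)
Definition is_residue_map (G : Type) (e : G) (le : G -> G -> Prop)
    (K : fieldType) (val : K -> option G) (F : fieldType) (pi : K -> F) : Prop :=
  ((forall x y, in_B e le val x -> in_B e le val y -> pi (x + y) = pi x + pi y) /\
      (forall x y, in_B e le val x -> in_B e le val y -> pi (x * y) = pi x * pi y) /\
      pi 1 = 1 /\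
      (forall c : F, exists x, in_B e le val x /\ pi x = c)/\
      (forall x, in_B e le val x -> (pi x = 0 <-> (in_B e le val x /\ val x <> Some e)))).

Definition strict_unit (G : Type) (e : G) (K : fieldType) (val : K -> option G)
    (F : fieldType) (pi : K -> F) (x : K) : Prop :=
  val x = Some e /\ pi x = 1.

Definition same_sq_class (G : Type) (mul : G -> G -> G) (a b : G) : Prop :=
  exists g, a = mul b (mul g g).

(* pan : K^× -> F^× (given as a function K -> F whose value at 0 is irrelevant)
   is a pseudo-angular component map: conditions (1)-(6). *)
Definition is_pseudo_angular_component (G : Type) (mul : G -> G -> G) (e : G)
    (le : G -> G -> Prop) (K : fieldType) (val : K -> option G)
    (F : fieldType) (pi : K -> F) (pan : K -> F) : Prop :=
  ((forall x : K, x != 0 -> pan x != 0) /\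
      (forall u : K, val u = Some e -> pan u = pi u) /\
      (forall u x : K, val u = Some e -> x != 0 -> pan (u * x) = pi u * pan x) /\
      (forall (g : G) (c : F), c != 0 -> exists w : K, val w = Some g /\ pan w = c) /\
      (forall x1 x2 : K, x1 != 0 -> x2 != 0 -> x1 + x2 != 0 ->
         (ole le (val x1) (val x2) /\ val x1 <> val x2 -> pan (x1 + x2) = pan x1) /\
         (val x1 = val x2 -> pan x1 + pan x2 != 0 ->
            val (x1 + x2) = val x1 /\ pan (x1 + x2) = pan x1 + pan x2)) /\
      (forall (x y : K) (gx gy : G), x != 0 -> y != 0 ->
         val x = Some gx -> val y = Some gy -> same_sq_class mul gx gy ->
         pan x = pan y -> exists u : K, u != 0 /\ y = u ^+ 2 * x)/\
      (forall a u : K, a != 0 -> u != 0 ->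
         exists k : F, k != 0 /\ pan (a * u ^+ 2) = pan a * k ^+ 2)).

From mathcomp Require Import all_boot all_algebra.
From mathcomp Require Import ring.
From Stdlib Require Import Classical ClassicalEpsilon FunctionalExtensionality PropExtensionality.
Import GRing.Theory.
Local Open Scope ring_scope.
Set Implicit Arguments.
Unset Strict Implicit.

(* The map is  pan x := pi (x / Q (val x)),  where Q : G -> K^x is a
   "square-compatible section" of the valuation:
     val (Q g) = g,   Q e = 1,   Q (g k^2) = Q g * w^2 for some w in K^x.
   1. Elementary facts on the ordered group (G has no 2-torsion), on the
      valuation (valuations of inverses, quotients, sums) and on the residue map.
   2. Such a section exists (by choice): pick a representative r g of each
      square class, a square root h g of g / r g, and an element of each
      valuation; the product  S (r g) * S (h g)^2  changes by a square along a
      square class, and dividing by its value at e normalises it at e.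
   3. For ANY square-compatible section the map pan satisfies (1)-(4) and (6);
      axiom (5) additionally uses that strict units are squares: two elements
      in the same square class with equal pan differ by a strict unit times a
      square. *)

Section OrderedGroup.
Variables (G : Type) (mul : G -> G -> G) (e : G) (inv : G -> G) (le : G -> G -> Prop).
Hypothesis HG : is_ordered_abgroup mul e inv le.

Lemma opA a b c : mul a (mul b c) = mul (mul a b) c.
Proof. by case: HG. Qed.

Lemma opC a b : mul a b = mul b a.
Proof. by case: HG => _ []. Qed.

Lemma op1 a : mul e a = a.
Proof. by case: HG => _ [] _ []. Qed.

Lemma opV a : mul (inv a) a = e.
Proof. by case: HG => _ [] _ [] _ []. Qed.

Lemma op1r a : mul a e = a.
Proof. by rewrite opC op1. Qed.

Lemma opVr a : mul a (inv a) = e.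
Proof. by rewrite opC opV. Qed.

Lemma opACA a b c d : mul (mul a b) (mul c d) = mul (mul a c) (mul b d).
Proof. by rewrite -!opA; congr (mul a); rewrite !opA (opC b c). Qed.

Lemma le_refl a : le a a.
Proof. by case: HG => _ [] _ [] _ [] _ [] H _; apply: H. Qed.

Lemma le_anti a b : le a b -> le b a -> a = b.
Proof. by case: HG => _ [] _ [] _ [] _ [] _ [] H _; apply: H. Qed.

Lemma le_trans a b c : le a b -> le b c -> le a c.
Proof. by case: HG => _ [] _ [] _ [] _ [] _ [] _ [] H _; apply: H. Qed.

Lemma le_total a b : le a b \/ le b a.
Proof. by case: HG => _ [] _ [] _ [] _ [] _ [] _ [] _ [] H _; apply: H. Qed.

Lemma le_mul2r a b c : le a b -> le (mul a c) (mul b c).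
Proof. by case: HG => _ [] _ [] _ [] _ [] _ [] _ [] _ [] _ H; apply: H. Qed.

Lemma sq_eq_unit t : mul t t = e -> t = e.
Proof.
move=> tt; have [te|et] := le_total t e.
- by apply: le_anti => //; have := le_mul2r t te; rewrite tt op1.
- by apply: le_anti => //; have := le_mul2r t et; rewrite tt op1.
Qed.

Lemma same_sq_class_mulr g k a :
  same_sq_class mul (mul g (mul k k)) a <-> same_sq_class mul g a.
Proof.
split=> -[h Hh].
- exists (mul h (inv k)).
  have -> : g = mul (mul g (mul k k)) (mul (inv k) (inv k)).
    by rewrite -opA opACA !opVr op1 op1r.
  by rewrite Hh -opA opACA.
- by exists (mul h k); rewrite Hh -opA opACA.
Qed.

End OrderedGroup.

Section Valuation.
Variables (G : Type) (mul : G -> G -> G) (e : G) (inv : G -> G) (le : G -> G -> Prop).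
Hypothesis HG : is_ordered_abgroup mul e inv le.
Variables (K : fieldType) (val : K -> option G).
Hypothesis Hval : is_valuation mul le val.

Lemma valM x y : val (x * y) = omul mul (val x) (val y).
Proof. by case: Hval => _ []. Qed.

Lemma val_surj g : exists x, val x = Some g.
Proof. by case: Hval => _ [] _ []. Qed.

Lemma val_neq0 x : x != 0 -> exists g, val x = Some g.
Proof.
move=> x0; case Hx: (val x) => [g|]; first by exists g.
by case: Hval => /(_ x) [] /(_ Hx) /eqP; rewrite (negbTE x0).
Qed.

Lemma val_Some_neq0 x g : val x = Some g -> x != 0.
Proof. by move=> Hx; apply/eqP => x0; case: Hval => /(_ x) [] _ /(_ x0); rewrite Hx. Qed.

Lemma val1 : val 1 = Some e.
Proof.
have [a Ha] := val_neq0 (oner_neq0 K).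
have := valM 1 1; rewrite mulr1 Ha /= => -[aa].
have : mul (inv a) (mul a a) = mul (inv a) a by rewrite -aa.
by rewrite (opA HG) !(opV HG) (op1 HG) => ->.
Qed.

Lemma valV q g : val q = Some g -> val q^-1 = Some (inv g).
Proof.
move=> Hq; have [h Hh] := val_neq0 (invr_neq0 (val_Some_neq0 Hq)).
have := valM q q^-1; rewrite divff ?(val_Some_neq0 Hq) // val1 Hq Hh /= => -[gh].
by rewrite -[h](op1 HG) -(opV HG g) -(opA HG) -gh (op1r HG).
Qed.

Lemma val_div_same x y g : val x = Some g -> val y = Some g -> val (x / y) = Some e.
Proof. by move=> Hx Hy; rewrite valM Hx (valV Hy) /= (opVr HG). Qed.

Lemma val_from_ratio x q g : val q = Some g -> val (x / q) = Some e -> val x = Some g.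
Proof.
move=> Hq Hxq; have -> : x = x / q * q by rewrite divfK ?(val_Some_neq0 Hq).
by rewrite valM Hxq Hq /= (op1 HG).
Qed.

Lemma val_sq_unit z : z != 0 -> val (z ^+ 2) = Some e -> val z = Some e.
Proof.
move=> z0; have [t Ht] := val_neq0 z0.
by rewrite expr2 valM Ht /= => -[/(sq_eq_unit HG) ->].
Qed.

Lemma ole_trans a b c : ole le a b -> ole le b c -> ole le a c.
Proof. by case: a b c => [a|] [b|] [c|] //=; apply: (le_trans HG). Qed.

Lemma inB_add x y : in_B e le val x -> in_B e le val y -> in_B e le val (x + y).
Proof.
rewrite /in_B => hx hy; case: Hval => _ [] _ [] /(_ x y) [] h _.
- exact: ole_trans hx h.
- exact: ole_trans hy h.
Qed.

Lemma inB_unit x : val x = Some e -> in_B e le val x.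
Proof. by rewrite /in_B => ->; apply: (le_refl HG). Qed.

Lemma val_div_gt y q g1 g2 : val y = Some g2 -> val q = Some g1 ->
  le g1 g2 -> g1 <> g2 -> in_B e le val (y / q) /\ val (y / q) <> Some e.
Proof.
move=> Hy Hq le12 ne12; rewrite /in_B valM Hy (valV Hq) /=; split.
- by rewrite -(opVr HG g1); apply: (le_mul2r HG).
- move=> -[g2g1]; apply: ne12.
  by rewrite -[g2](op1r HG) -(opV HG g1) (opA HG) g2g1 (op1 HG).
Qed.

End Valuation.

Section Residue.
Variables (G : Type) (mul : G -> G -> G) (e : G) (inv : G -> G) (le : G -> G -> Prop).
Hypothesis HG : is_ordered_abgroup mul e inv le.
Variables (K : fieldType) (val : K -> option G).
Hypothesis Hval : is_valuation mul le val.
Variables (F : fieldType) (pi : K -> F).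
Hypothesis Hpi : is_residue_map e le val pi.

Lemma piD x y : in_B e le val x -> in_B e le val y -> pi (x + y) = pi x + pi y.
Proof. by case: Hpi => H _; apply: H. Qed.

Lemma piM x y : in_B e le val x -> in_B e le val y -> pi (x * y) = pi x * pi y.
Proof. by case: Hpi => _ [] H _; apply: H. Qed.

Lemma pi_surj c : exists x, in_B e le val x /\ pi x = c.
Proof. by case: Hpi => _ [] _ [] _ [] H _; apply: H. Qed.

Lemma pi_eq0 x : in_B e le val x -> (pi x = 0 <-> val x <> Some e).
Proof.
move=> xB; case: Hpi => _ [] _ [] _ [] _ /(_ x xB) [H1 H2].
by split=> [/H1 []|xe] //; apply: H2.
Qed.

Lemma pi_unit_neq0 x : val x = Some e -> pi x != 0.
Proof. by move=> xe; apply/eqP => /(pi_eq0 (inB_unit HG xe)). Qed.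

Lemma pi_neq0_unit x : in_B e le val x -> pi x != 0 -> val x = Some e.
Proof. by move=> xB /eqP px0; apply: NNPP => /(pi_eq0 xB). Qed.

Lemma ratio_strict_unit a b : val a = Some e -> val b = Some e -> pi a = pi b ->
  strict_unit e val pi (b / a).
Proof.
move=> Ha Hb pab; have ba := val_div_same HG Hval Hb Ha; split=> //.
have pa := pi_unit_neq0 Ha.
have := piM (inB_unit HG ba) (inB_unit HG Ha).
rewrite divfK ?(val_Some_neq0 Hval Ha) // -pab => /(congr1 (fun t => t / pi a)).
by rewrite divff // mulfK // => <-.
Qed.

End Residue.

Section SquareSection.
Variables (G : Type) (mul : G -> G -> G) (e : G) (inv : G -> G) (le : G -> G -> Prop).
Hypothesis HG : is_ordered_abgroup mul e inv le.
Variables (K : fieldType) (val : K -> option G).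
Hypothesis Hval : is_valuation mul le val.

Definition class_rep (g : G) : G := epsilon (inhabits e) (same_sq_class mul g).

Definition class_root (g : G) : G :=
  epsilon (inhabits e) (fun h => g = mul (class_rep g) (mul h h)).

Definition val_lift (g : G) : K := epsilon (inhabits 1) (fun x => val x = Some g).

Definition raw_section (g : G) : K :=
  val_lift (class_rep g) * val_lift (class_root g) ^+ 2.

Definition square_section (g : G) : K := raw_section g / raw_section e.

Lemma class_rootP g : g = mul (class_rep g) (mul (class_root g) (class_root g)).
Proof.
apply: (epsilon_spec (inhabits e) (fun h => g = mul (class_rep g) (mul h h))).
apply: (epsilon_spec (inhabits e) (same_sq_class mul g)).
by exists g, e; rewrite (op1 HG) (op1r HG).
Qed.

Lemma class_rep_mulr g k : class_rep (mul g (mul k k)) = class_rep g.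
Proof.
rewrite /class_rep; congr epsilon; apply: functional_extensionality => a.
exact/propositional_extensionality/(same_sq_class_mulr HG).
Qed.

Lemma val_liftP g : val (val_lift g) = Some g.
Proof.
exact: (epsilon_spec (inhabits 1) (fun x => val x = Some g)) (val_surj Hval g).
Qed.

Lemma val_lift_neq0 g : val_lift g != 0.
Proof. exact: (val_Some_neq0 Hval (val_liftP g)). Qed.

Lemma val_raw_section g : val (raw_section g) = Some g.
Proof. by rewrite /raw_section expr2 !(valM Hval) !val_liftP /= -class_rootP. Qed.

Lemma val_square_section g : val (square_section g) = Some g.
Proof.
rewrite /square_section (valM Hval) val_raw_section (valV HG Hval (val_raw_section e)).
by rewrite /= -[inv e](op1 HG) (opVr HG) (op1r HG).
Qed.

Lemma square_section1 : square_section e = 1.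
Proof. by rewrite /square_section divff // (val_Some_neq0 Hval (val_raw_section e)). Qed.

Lemma square_section_mulr g k :
  exists w, w != 0 /\ square_section (mul g (mul k k)) = square_section g * w ^+ 2.
Proof.
exists (val_lift (class_root (mul g (mul k k))) / val_lift (class_root g)).
split; first by rewrite mulf_neq0 ?invr_eq0 ?val_lift_neq0.
have := val_Some_neq0 Hval (val_raw_section e).
rewrite /square_section; set r := raw_section e => r0.
by rewrite /raw_section class_rep_mulr; field; rewrite r0 val_lift_neq0.
Qed.

End SquareSection.

Section PseudoAngular.
Variables (G : Type) (mul : G -> G -> G) (e : G) (inv : G -> G) (le : G -> G -> Prop).
Hypothesis HG : is_ordered_abgroup mul e inv le.
Variables (K : fieldType) (val : K -> option G).
Hypothesis Hval : is_valuation mul le val.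
Variables (F : fieldType) (pi : K -> F).
Hypothesis Hpi : is_residue_map e le val pi.

Variable Q : G -> K.
Hypothesis val_Q : forall g, val (Q g) = Some g.
Hypothesis Q1 : Q e = 1.
Hypothesis Q_mulr : forall g k, exists w, w != 0 /\ Q (mul g (mul k k)) = Q g * w ^+ 2.

Definition pan (x : K) : F := if val x is Some g then pi (x / Q g) else 0.

Lemma pan_val x g : val x = Some g -> pan x = pi (x / Q g).
Proof. by rewrite /pan => ->. Qed.

Lemma Q_neq0 g : Q g != 0.
Proof. exact: (val_Some_neq0 Hval (val_Q g)). Qed.

Lemma val_ratio x g : val x = Some g -> val (x / Q g) = Some e.
Proof. by move=> Hx; exact: (val_div_same HG Hval Hx (val_Q g)). Qed.

Lemma pan_from_ratio x g : in_B e le val (x / Q g) -> pi (x / Q g) != 0 ->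
  val x = Some g /\ pan x = pi (x / Q g).
Proof.
move=> xB px; have Hx := val_from_ratio HG Hval (val_Q g) (pi_neq0_unit Hpi xB px).
by rewrite (pan_val Hx).
Qed.

Lemma pan_neq0 x : x != 0 -> pan x != 0.
Proof.
by move=> /(val_neq0 Hval) [g Hx]; rewrite (pan_val Hx) (pi_unit_neq0 HG Hpi (val_ratio Hx)).
Qed.

Lemma pan_unit u : val u = Some e -> pan u = pi u.
Proof. by move=> Hu; rewrite (pan_val Hu) Q1 divr1. Qed.

Lemma pan_mul_unit u x : val u = Some e -> x != 0 -> pan (u * x) = pi u * pan x.
Proof.
move=> Hu /(val_neq0 Hval) [g Hx]; rewrite (pan_val Hx).
have ux_unit : val (u * x / Q g) = Some e.
  by rewrite -mulrA (valM Hval) Hu (val_ratio Hx) /= (op1 HG).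
have [_ ->] := pan_from_ratio (inB_unit HG ux_unit) (pi_unit_neq0 HG Hpi ux_unit).
by rewrite -mulrA (piM Hpi (inB_unit HG Hu) (inB_unit HG (val_ratio Hx))).
Qed.

Lemma pan_surj g c : c != 0 -> exists w, val w = Some g /\ pan w = c.
Proof.
move=> c0; have [b [bB pb]] := pi_surj Hpi c.
have bQ : b * Q g / Q g = b by rewrite mulfK ?Q_neq0.
rewrite -bQ in bB pb; have pb0 : pi (b * Q g / Q g) != 0 by rewrite pb.
have [Hw pw] := pan_from_ratio bB pb0.
by exists (b * Q g); rewrite pw pb.
Qed.

Lemma pan_add_lt x1 x2 : x1 != 0 -> x2 != 0 ->
  ole le (val x1) (val x2) /\ val x1 <> val x2 -> pan (x1 + x2) = pan x1.
Proof.
move=> /(val_neq0 Hval) [g1 H1] /(val_neq0 Hval) [g2 H2].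
rewrite H1 H2 /= => -[le12 ne12].
have [x2B x2u] := val_div_gt HG Hval H2 (val_Q g1) le12 (fun E => ne12 (congr1 Some E)).
have x1B := inB_unit HG (val_ratio H1).
have psum : pi ((x1 + x2) / Q g1) = pi (x1 / Q g1).
  by rewrite mulrDl (piD Hpi) // (proj2 (pi_eq0 Hpi x2B) x2u) addr0.
have sumB : in_B e le val ((x1 + x2) / Q g1) by rewrite mulrDl; exact: (inB_add HG Hval x1B x2B).
have psum0 : pi ((x1 + x2) / Q g1) != 0 by rewrite psum (pi_unit_neq0 HG Hpi (val_ratio H1)).
by have [_ ->] := pan_from_ratio sumB psum0; rewrite psum (pan_val H1).
Qed.

Lemma pan_add_eq x1 x2 : x1 != 0 -> val x1 = val x2 -> pan x1 + pan x2 != 0 ->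
  val (x1 + x2) = val x1 /\ pan (x1 + x2) = pan x1 + pan x2.
Proof.
move=> /(val_neq0 Hval) [g H1] H12; rewrite H1 in H12.
have x1B := inB_unit HG (val_ratio H1); have x2B := inB_unit HG (val_ratio (esym H12)).
rewrite (pan_val H1) (pan_val (esym H12)) -(piD Hpi) // -mulrDl => psum.
have sumB : in_B e le val ((x1 + x2) / Q g) by rewrite mulrDl; exact: (inB_add HG Hval x1B x2B).
by have [-> ->] := pan_from_ratio sumB psum; rewrite H1.
Qed.

Lemma pan_same_class x y gx gy :
  (forall z, strict_unit e val pi z -> exists v, v ^+ 2 = z) ->
  val x = Some gx -> val y = Some gy ->
  same_sq_class mul gx gy -> pan x = pan y -> exists u, u != 0 /\ y = u ^+ 2 * x.
Proof.
move=> Hsqrt Hx Hy [k Hk]; rewrite (pan_val Hx) (pan_val Hy) => pxy.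
have [w [w0 Qk]] := Q_mulr gy k; rewrite -Hk in Qk.
have c_unit := ratio_strict_unit HG Hval Hpi (val_ratio Hx) (val_ratio Hy) pxy.
have [v Hv] := Hsqrt _ c_unit.
have v0 : v != 0.
  apply/eqP => v0; move: (val_Some_neq0 Hval (proj1 c_unit)).
  by rewrite -Hv v0 expr0n eqxx.
exists (v / w); split; first by rewrite mulf_neq0 ?invr_eq0.
rewrite expr_div_n Hv Qk; field.
by rewrite Q_neq0 w0 (val_Some_neq0 Hval Hx).
Qed.

Lemma pan_mul_sq a u : a != 0 -> u != 0 ->
  exists k, k != 0 /\ pan (a * u ^+ 2) = pan a * k ^+ 2.
Proof.
move=> a0 u0; have [ga Ha] := val_neq0 Hval a0; have [gu Hu] := val_neq0 Hval u0.
have [w [w0 Qsq]] := Q_mulr ga gu.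
have Hau : val (a * u ^+ 2) = Some (mul ga (mul gu gu)).
  by rewrite (valM Hval) expr2 (valM Hval) Ha Hu.
have z0 : u / w != 0 by rewrite mulf_neq0 ?invr_eq0.
have ratio : a * u ^+ 2 / Q (mul ga (mul gu gu)) = a / Q ga * (u / w) ^+ 2.
  by rewrite Qsq; field; rewrite Q_neq0 w0.
have Hz : val (u / w) = Some e.
  apply: (val_sq_unit HG Hval z0).
  have := val_div_same HG Hval (val_ratio Hau) (val_ratio Ha).
  by rewrite ratio mulrAC divff ?mul1r // mulf_neq0 ?invr_eq0 ?Q_neq0.
have Hz2 : val ((u / w) ^+ 2) = Some e by rewrite expr2 (valM Hval) Hz /= (op1 HG).
exists (pi (u / w)); split; first exact: (pi_unit_neq0 HG Hpi Hz).
rewrite (pan_val Hau) (pan_val Ha) ratio (piM Hpi (inB_unit HG (val_ratio Ha)) (inB_unit HG Hz2)).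
by rewrite !expr2 (piM Hpi (inB_unit HG Hz) (inB_unit HG Hz)).
Qed.

Lemma pan_is_pseudo_angular :
  (forall z, strict_unit e val pi z -> exists v, v ^+ 2 = z) ->
  is_pseudo_angular_component mul e le val pi pan.
Proof.
move=> Hsqrt; split; [exact: pan_neq0 | split; [exact: pan_unit | split]].
  exact: pan_mul_unit.
split; [exact: pan_surj | split; last split].
- move=> x1 x2 x10 x20 _; split; first exact: pan_add_lt.
  by move=> H12 S; have [] := pan_add_eq x10 H12 S.
- by move=> x y gx gy _ _; apply: pan_same_class.
- exact: pan_mul_sq.
Qed.

End PseudoAngular.

Theorem mainTheorem1 (G : Type) (mul : G -> G -> G) (e : G) (inv : G -> G)
    (le : G -> G -> Prop) (HG : is_ordered_abgroup mul e inv le)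
    (K : fieldType) (val : K -> option G) (Hval : is_valuation mul le val)
    (F : fieldType) (pi : K -> F) (Hpi : is_residue_map e le val pi)
    (Hsqrt : forall x : K, strict_unit e val pi x -> exists y : K, y ^+ 2 = x) :
  exists pan : K -> F, is_pseudo_angular_component mul e le val pi pan.
Proof.
exists (pan val pi (square_section mul e val)).
apply: (pan_is_pseudo_angular HG Hval Hpi _ _ _ Hsqrt).
- exact: (val_square_section HG Hval).
- exact: (square_section1 HG Hval).
- exact: (square_section_mulr HG Hval).
Qed.
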